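(* Let $T, N$ be positive integers and $\delta>0$. Let $L\in\mathbb{R}^{T\times T}$ be the lower triangular matrix with $L_{jk}=\delta$ for $k\le j$ and $L_{jk}=0$ for $k>j$, and let $H := (L,\,-L,\,I_T,\,-I_T)\in\mathbb{R}^{4T\times T}$ (vertical stacking). For $i=1,\dots,N$ let $h_i := (\overline{x}_i,\,-\underline{x}_i,\,\overline{u}_i,\,-\underline{u}_i)\in\mathbb{R}^{4T}$ for given vectors $\overline{x}_i,\underline{x}_i,\overline{u}_i,\underline{u}_i\in\mathbb{R}^T$, and suppose each set $\mathbb{U}_i := \{u\in\mathbb{R}^T \mid Hu\le h_i\}$ is nonempty. Let $h_0 := \frac{1}{N}\sum_{i=1}^N h_i$, $\mathbb{U}_0 := \{u\in\mathbb{R}^T\mid Hu\le h_0\}$, and $\mathbb{U} := \mathbb{U}_1+\dots+\mathbb{U}_N$ (Minkowski sum). Let $Q\in\mathbb{R}^{T\times T}$ be invertible. If there exist $\gamma_i\in\mathbb{R}^T$ and $\Lambda_i\in\mathbb{R}^{4T\times 4T}$ for $i=1,\dots,N$ such that $\sum_{i=1}^N\gamma_i = 0$ and, for each $i=1,\dots,N$: $\Lambda_i\ge 0$ (entrywise), $\Lambda_i H = HQ^{-1}$, and $\Lambda_i h_i\le \frac{1}{N}h_0 - H\gamma_i$ (entrywise), then $\mathbb{U}\subseteq Q\mathbb{U}_0$.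
   Context: For a matrix $Q$, $Q\mathbb{X} := \{Qx\mid x\in\mathbb{X}\}$. Vector and matrix inequalities are entrywise. $(A,B)$ denotes vertical stacking of $A$ and $B$. *)

From mathcomp Require Import all_boot all_order all_algebra.
Set Implicit Arguments. Unset Strict Implicit. Unset Printing Implicit Defensive.
Import Order.TTheory GRing.Theory Num.Theory.
Local Open Scope ring_scope.

Definition mx_le (R : realFieldType) m n (A B : 'M[R]_(m, n)) : Prop :=
  forall i j, A i j <= B i j.

Definition Lmx (R : realFieldType) (T : nat) (delta : R) : 'M[R]_T :=
  \matrix_(j < T, k < T) (if (k <= j)%N then delta else 0).

Definition Hmx (R : realFieldType) (T : nat) (delta : R) : 'M[R]_(T + T + (T + T), T) :=
  col_mx (col_mx (Lmx T delta) (- Lmx T delta)) (col_mx 1%:M (- 1%:M)).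

Definition hvec (R : realFieldType) (T : nat) (xb xl ub ul : 'cV[R]_T)
  : 'cV[R]_(T + T + (T + T)) :=
  col_mx (col_mx xb (- xl)) (col_mx ub (- ul)).

Definition polyU (R : realFieldType) (p T : nat) (H : 'M[R]_(p, T)) (h : 'cV[R]_p)
  : 'cV[R]_T -> Prop := fun u => mx_le (H *m u) h.

Definition minkowski_sum (R : realFieldType) (T N : nat) (S : 'I_N -> 'cV[R]_T -> Prop)
  : 'cV[R]_T -> Prop :=
  fun u => exists v : 'I_N -> 'cV[R]_T, (forall i, S i (v i)) /\ u = \sum_(i < N) v i.

Definition mx_image (R : realFieldType) (T : nat) (Q : 'M[R]_T) (X : 'cV[R]_T -> Prop)
  : 'cV[R]_T -> Prop := fun y => exists x, X x /\ y = Q *m x.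

From mathcomp Require Import all_boot all_order all_algebra.
Set Implicit Arguments. Unset Strict Implicit. Unset Printing Implicit Defensive.
Import Order.TTheory GRing.Theory Num.Theory.
Local Open Scope ring_scope.

(* If u = u_1 + ... + u_N with H u_i <= h_i, then, since each Lambda_i is
   nonnegative, H Q^-1 u = sum_i Lambda_i H u_i <= sum_i Lambda_i h_i
   <= sum_i (h_0 / N - H gamma_i) = h_0, the gamma_i summing to 0; so
   u = Q (Q^-1 u) with Q^-1 u in U_0. *)

Section EntrywiseOrder.

Variable R : realFieldType.

Lemma mx_le_trans m n (A B C : 'M[R]_(m, n)) :
  mx_le A B -> mx_le B C -> mx_le A C.
Proof. by move=> AB BC i j; apply: le_trans (AB i j) (BC i j). Qed.

Lemma mx_le_sum m n N (A B : 'I_N -> 'M[R]_(m, n)) :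
  (forall k, mx_le (A k) (B k)) -> mx_le (\sum_k A k) (\sum_k B k).
Proof. by move=> AB i j; rewrite !summxE; apply: ler_sum => k _; apply: AB. Qed.

Lemma mx_le_mul2l m n p (L : 'M[R]_(m, n)) (A B : 'M[R]_(n, p)) :
  mx_le 0 L -> mx_le A B -> mx_le (L *m A) (L *m B).
Proof.
move=> L_ge0 AB i j; rewrite !mxE; apply: ler_sum => k _.
by apply: ler_wpM2l; [have := L_ge0 i k; rewrite mxE | apply: AB].
Qed.

End EntrywiseOrder.

Lemma minkowski_sum_polyU_mulmx (R : realFieldType) p T N (H : 'M[R]_(p, T))
    (P : 'M[R]_T) (h g : 'I_N -> 'cV[R]_p) (Lam : 'I_N -> 'M[R]_p) :
  (forall i, mx_le 0 (Lam i)) -> (forall i, Lam i *m H = H *m P) ->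
  (forall i, mx_le (Lam i *m h i) (g i)) ->
  forall u, minkowski_sum (fun i => polyU H (h i)) u ->
  polyU H (\sum_i g i) (P *m u).
Proof.
move=> Lam_ge0 LamH Lamh _ [v [Hv ->]]; rewrite /polyU.
have -> : H *m (P *m \sum_i v i) = \sum_i Lam i *m (H *m v i).
  by rewrite mulmxA mulmx_sumr; apply: eq_bigr => i _; rewrite mulmxA LamH.
apply: mx_le_sum => i; apply: mx_le_trans (Lamh i).
exact: mx_le_mul2l (Lam_ge0 i) (Hv i).
Qed.

Lemma sum_avg_sub_mulmx (R : realFieldType) p T N (H : 'M[R]_(p, T))
    (h : 'cV[R]_p) (gamma : 'I_N -> 'cV[R]_T) :
  (0 < N)%N -> \sum_i gamma i = 0 ->
  \sum_(i < N) (N%:R^-1 *: h - H *m gamma i) = h.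
Proof.
move=> N_gt0 gamma_sum0.
rewrite sumrB -mulmx_sumr gamma_sum0 mulmx0 subr0 sumr_const card_ord.
by rewrite -scaler_nat scalerA mulrV ?scale1r // unitfE pnatr_eq0 -lt0n.
Qed.

Theorem corollary1 (R : realFieldType) (T N : nat) (delta : R)
  (xb xl ub ul : 'I_N -> 'cV[R]_T) (Q : 'M[R]_T)
  (gamma : 'I_N -> 'cV[R]_T) (Lam : 'I_N -> 'M[R]_(T + T + (T + T))) :
  (0 < T)%N -> (0 < N)%N -> 0 < delta ->
  (forall i, exists u, polyU (Hmx T delta) (hvec (xb i) (xl i) (ub i) (ul i)) u) ->
  Q \in unitmx ->
  \sum_(i < N) gamma i = 0 ->
  (forall i, mx_le 0 (Lam i)) ->
  (forall i, Lam i *m Hmx T delta = Hmx T delta *m invmx Q) ->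
  (forall i, mx_le (Lam i *m hvec (xb i) (xl i) (ub i) (ul i))
     (N%:R^-1 *: (N%:R^-1 *: \sum_(k < N) hvec (xb k) (xl k) (ub k) (ul k))
      - Hmx T delta *m gamma i)) ->
  forall u,
    minkowski_sum (fun i => polyU (Hmx T delta) (hvec (xb i) (xl i) (ub i) (ul i))) u ->
    mx_image Q (polyU (Hmx T delta) (N%:R^-1 *: \sum_(k < N) hvec (xb k) (xl k) (ub k) (ul k))) u.
Proof.
move=> _ N_gt0 _ _ Q_unit gamma_sum0 Lam_ge0 LamH Lamh u u_in_sum.
exists (invmx Q *m u); split; last by rewrite mulmxA mulmxV ?mul1mx.
set h0 := N%:R^-1 *: \sum_(k < N) _.
rewrite -(sum_avg_sub_mulmx (Hmx T delta) h0 N_gt0 gamma_sum0).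
exact: minkowski_sum_polyU_mulmx Lam_ge0 LamH Lamh u u_in_sum.
Qed.
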